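(* For all integers $q\ge1$ and $n\ge1$, the number of nonattacking placements of $q$ unlabelled semibishops on the $n\times n$ triangular board is $$u^{\mathcal T}_{\mathsf Q^{01}}(q;n)=(-1)^q s(n+1,n+1-q).$$
   Context: The $n\times n$ triangular board is the set $\{(x,y)\in\mathbb Z^2:1\le x\le y-1\le n\}$ (the integral points in the interior of the $(n+2)$-fold dilation of the triangle $\{0\le x\le y\le1\}$). The semibishop has the single basic move $(1,1)$: two pieces at positions $z,z'$ attack each other if $z'-z$ is an integer multiple of $(1,1)$ (including $z=z'$). $u^{\mathcal T}_{\mathsf Q^{01}}(q;n)$ counts the sets of $q$ positions on the triangular board no two of which attack each other. $s(a,b)$ is the signed Stirling number of the first kind. *)

From mathcomp Require Import all_boot all_order all_algebra ssrint.
Set Implicit Arguments. Unset Strict Implicit. Unset Printing Implicit Defensive.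
Import GRing.Theory Num.Theory.

Fixpoint stirling1s (a b : nat) : int :=
  match a, b with
  | 0, 0 => 1
  | 0, _.+1 => 0
  | _.+1, 0 => 0
  | a'.+1, b'.+1 => (stirling1s a' b' - a'%:Z * stirling1s a' b'.+1)%R
  end.

(* Positions are pairs of integers; every board point has coordinates in
   {0,...,n+1}, so we use the finite type 'I_(n+2) * 'I_(n+2). *)
Definition pos (n : nat) := ('I_(n.+2) * 'I_(n.+2))%type.

Definition tri_board (n : nat) : {set pos n} :=
  [set z : pos n | [&& 1 <= z.1, z.1 <= z.2 - 1 & z.2 - 1 <= n]%N].

Definition semibishop_attack (n : nat) (z z' : pos n) : bool :=
  ((z'.1)%:Z - (z.1)%:Z == (z'.2)%:Z - (z.2)%:Z)%R.

Definition u_tri_semibishop (q n : nat) : nat :=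
  #|[set S : {set pos n} | [&& S \subset tri_board n, #|S| == q &
      [forall z in S, forall z' in S, (z != z') ==> ~~ semibishop_attack z z']]]|.

From mathcomp Require Import all_boot all_order all_algebra ssrint.
From mathcomp Require Import zify ring.
Import GRing.Theory Num.Theory.
Set Implicit Arguments. Unset Strict Implicit.

(* Two cells attack each other iff they lie on the same diagonal y - x = d, and
   the diagonals of the board have lengths 1, ..., n.  A nonattacking set is
   thus a choice of q distinct diagonals and of one cell on each, so its number
   is the elementary symmetric function e_q(1, ..., n) = (-1)^q s(n+1, n+1-q).
   Adding the diagonals in order of length, a set either avoids the new
   diagonal of length m+1 or uses exactly one of its m+1 cells, which is the
   recurrence of the Stirling numbers. *)

Section Transversals.
Variables (T : finType) (K : eqType) (g : T -> K).

Definition transversals (B : {set T}) (q : nat) : {set {set T}} :=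
  [set S : {set T} | [&& S \subset B, #|S| == q & dinjectiveb g S]].

Lemma dinjectivebE (S : {set T}) :
  dinjectiveb g S = [forall z in S, forall z' in S, (z != z') ==> (g z != g z')].
Proof.
apply/dinjectiveP/forall_inP => [g_inj z zS | g_sep z z' zS z'S gzz'].
  apply/forall_inP => z' z'S; apply/implyP; apply: contra => /eqP gzz'.
  by rewrite (g_inj z z').
apply/eqP; apply: contraTT (forall_inP (g_sep z zS) z' z'S) => zz'.
by rewrite negb_imply zz' gzz' eqxx.
Qed.

Lemma transversals0 (B : {set T}) : transversals B 0 = [set set0].
Proof.
apply/setP => S; rewrite !inE cards_eq0.
have [->|] := eqP; last by rewrite andbF.
by rewrite sub0set; apply/dinjectiveP => z; rewrite inE.
Qed.

Lemma transversals_set0 q : transversals set0 q.+1 = set0.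
Proof. by apply/setP => S; rewrite !inE subset0; case: eqP => // ->; rewrite cards0. Qed.

Section AddFibre.
Variables (A B : {set T}).
Hypotheses (disjAB : [disjoint A & B]) (gA : {in A &, forall a a', g a = g a'})
  (gAB : {in A & B, forall a b, g a != g b}).

Lemma notin_transversals a (S : {set T}) q : a \in A -> S \in transversals B q -> a \notin S.
Proof.
move=> aA; rewrite inE => /and3P [sSB _ _].
by apply: contraL aA => /(subsetP sSB) aB; rewrite (disjointFl disjAB aB).
Qed.

Lemma transversals_setU1 a (S : {set T}) q : a \in A -> S \in transversals B q ->
  a |: S \in transversals (A :|: B) q.+1.
Proof.
move=> aA ST; have aS := notin_transversals aA ST.
move: ST; rewrite !inE => /and3P [sSB /eqP <- /dinjectiveP g_inj].
rewrite cardsU1 aS eqxx subUset sub1set inE aA (subset_trans sSB (subsetUr _ _)) /=.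
apply/dinjectiveP => z z'; rewrite !inE.
case/predU1P=> [->|zS]; case/predU1P=> [->|z'S] //.
- by move/eqP; rewrite (negPf (gAB aA (subsetP sSB _ z'S))).
- by move/esym/eqP; rewrite (negPf (gAB aA (subsetP sSB _ zS))).
- exact: g_inj.
Qed.

Lemma transversals_setD1 a (S : {set T}) q : a \in A -> a \in S ->
  S \in transversals (A :|: B) q.+1 -> S :\ a \in transversals B q.
Proof.
move=> aA aS; rewrite !inE => /and3P [sSAB cardS /dinjectiveP g_inj].
rewrite (cardsD1 a) aS eqSS in cardS; rewrite cardS /=; apply/andP; split.
  apply/subsetP => z; rewrite !inE => /andP [za zS].
  have /setUP [zA|//] := subsetP sSAB _ zS.
  by case/eqP: za; apply: g_inj => //; exact: gA.
by apply/dinjectiveP; apply: sub_in2 g_inj => z /setD1P [].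
Qed.

Lemma card_transversalsU q :
  #|transversals (A :|: B) q.+1| = #|transversals B q.+1| + #|A| * #|transversals B q|.
Proof.
set added := [set p.1 |: p.2 | p in setX A (transversals B q)].
have card_added : #|added| = #|A| * #|transversals B q|.
  rewrite card_in_imset ?cardsX //.
  move=> [a S] [a' S'] /setXP [/= aA SB] /setXP [/= a'A S'B] /= eqS.
  have eqa : a = a'.
    have /setU1P [//|aS'] : a \in a' |: S' by rewrite -eqS setU11.
    by case/negP: (notin_transversals aA S'B).
  subst a'; congr (_, _).
  by rewrite -(setU1K (notin_transversals aA SB)) eqS setU1K // (notin_transversals aA S'B).
have transversalsU_eq : transversals (A :|: B) q.+1 = transversals B q.+1 :|: added.
  apply/setP => S; rewrite in_setU; apply/idP/orP.
    move=> ST; have [SA0 | [a /setIP [aS aA]]] := set_0Vmem (S :&: A).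
      left; move: ST; rewrite !inE => /and3P [sSAB -> ->]; rewrite !andbT.
      apply/subsetP => z zS; have /setUP [zA|//] := subsetP sSAB _ zS.
      by move/setP/(_ z): SA0; rewrite !inE zS zA.
    right; apply/imsetP; exists (a, S :\ a); last by rewrite /= setD1K.
    by rewrite inE /= aA; exact: transversals_setD1.
  case=> [|/imsetP [[a S'] /setXP [/= aA S'B] ->]]; last exact: transversals_setU1.
  rewrite !inE => /and3P [sSB -> ->]; rewrite !andbT.
  exact: subset_trans sSB (subsetUr _ _).
have disj : transversals B q.+1 :&: added = set0.
  apply/setP => S; rewrite !inE; apply/negbTE/andP.
  case=> /and3P [sSB _ _] /imsetP [[a S'] /setXP [/= aA _] eqS].
  by move: sSB; rewrite eqS subUset sub1set (disjointFr disjAB aA).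
by rewrite transversalsU_eq cardsU disj cards0 subn0 card_added.
Qed.

End AddFibre.
End Transversals.

Lemma stirling1s_gt a b : (a < b)%N -> stirling1s a b = 0%R.
Proof. by elim: a b => [|a IH] [|b] //= ltab; rewrite !IH ?mulr0 ?subr0 // ltnW. Qed.

Lemma stirling1s_diag a : stirling1s a a = 1%R.
Proof. by elim: a => //= a ->; rewrite stirling1s_gt // mulr0 subr0. Qed.

(* The unsigned Stirling number c(m+1, m+1-q), i.e. e_q(1, ..., m). *)
Definition stirling1_rev (m q : nat) : int := ((-1) ^+ q * stirling1s m.+1 (m.+1 - q))%R.

Lemma stirling1_rev0 m : stirling1_rev m 0 = 1%R.
Proof. by rewrite /stirling1_rev subn0 stirling1s_diag mulr1. Qed.

Lemma stirling1_rev0S q : stirling1_rev 0 q.+1 = 0%R.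
Proof. by rewrite /stirling1_rev subSS sub0n mulr0. Qed.

Lemma stirling1sSS a b :
  stirling1s a.+1 b.+1 = (stirling1s a b - a%:Z * stirling1s a b.+1)%R.
Proof. by []. Qed.

Lemma stirling1_revSS m q :
  stirling1_rev m.+1 q.+1 = (stirling1_rev m q.+1 + m.+1%:Z * stirling1_rev m q)%R.
Proof.
rewrite /stirling1_rev !subSS; have [leqm | ltmq] := leqP q m.
  by rewrite subSn // stirling1sSS exprS; ring.
by rewrite (eqP ltmq) (eqP (ltnW ltmq)) /= !mulr0 addr0.
Qed.

Section TriangularBoard.
Variable n : nat.

Definition diagonal (z : pos n) : int := (z.2%:Z - z.1%:Z)%R.

Lemma semibishop_attackE (z z' : pos n) :
  semibishop_attack z z' = (diagonal z == diagonal z').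
Proof. by rewrite /semibishop_attack /diagonal; apply/eqP/eqP; lia. Qed.

Definition diag_length (z : pos n) : nat := n.+1 - (z.2 - z.1).

Definition board_upto (m : nat) : {set pos n} :=
  [set z in tri_board n | diag_length z <= m].

Definition diagonal_of_length (k : nat) : {set pos n} :=
  [set z in tri_board n | diag_length z == k].

Lemma board_upto0 : board_upto 0 = set0.
Proof. by apply/setP => z; rewrite !inE /diag_length; lia. Qed.

Lemma board_upto_n : board_upto n = tri_board n.
Proof. by apply/setP => z; rewrite !inE /diag_length; lia. Qed.

Lemma board_uptoS m : board_upto m.+1 = diagonal_of_length m.+1 :|: board_upto m.
Proof. by apply/setP => z; rewrite !inE /diag_length; lia. Qed.

Lemma card_diagonal_of_length k : (k <= n)%N -> #|diagonal_of_length k| = k.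
Proof.
move=> lekn.
pose f (i : 'I_k) : pos n := (inord i.+1, inord (i.+1 + (n.+1 - k))).
have f_inj : injective f.
  move=> i j [/(congr1 val) /= eq1 _]; apply: ord_inj; move: eq1.
  have lti := ltn_ord i; have ltj := ltn_ord j; rewrite !inordK; lia.
suff -> : diagonal_of_length k = f @: 'I_k by rewrite card_imset // card_ord.
apply/setP => -[x y]; rewrite !inE /diag_length /=; apply/idP/imsetP => [onz | [i _ [-> ->]]].
  have ltxk : (x - 1 < k)%N by lia.
  exists (Ordinal ltxk) => //; congr (_, _); apply: val_inj; rewrite /= inordK; lia.
by have lti := ltn_ord i; rewrite !inordK; lia.
Qed.

Lemma card_transversals_board_upto m q : (m <= n)%N ->
  (#|transversals diagonal (board_upto m) q|%:Z = stirling1_rev m q)%R.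
Proof.
elim: m q => [|m IHm] [|q] lemn; rewrite ?transversals0 ?cards1 ?stirling1_rev0 //.
  by rewrite board_upto0 transversals_set0 cards0 stirling1_rev0S.
rewrite board_uptoS card_transversalsU.
- by rewrite card_diagonal_of_length // PoszD PoszM !IHm 1?ltnW // stirling1_revSS.
- by apply/pred0P => z /=; rewrite !inE /diag_length; lia.
- by move=> a a'; rewrite !inE /diag_length /diagonal; lia.
- by move=> a b; rewrite !inE /diag_length /diagonal; lia.
Qed.

Lemma u_tri_semibishopE q :
  u_tri_semibishop q n = #|transversals diagonal (tri_board n) q|.
Proof.
apply: eq_card => S; rewrite !inE dinjectivebE.
do 2!congr (_ && _); apply: eq_forallb_in => z _; apply: eq_forallb_in => z' _.
by rewrite semibishop_attackE.
Qed.

End TriangularBoard.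

Theorem proposition7p4 (q n : nat) (hq : (1 <= q)%N) (hn : (1 <= n)%N) :
  ((u_tri_semibishop q n)%:Z = (-1) ^+ q * stirling1s n.+1 (n.+1 - q))%R.
Proof. by rewrite u_tri_semibishopE -board_upto_n card_transversals_board_upto. Qed.
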